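(* Let $c \in \mathbb{Z}$ and $f_c(x) = x^2+c$. If $-c$ is not a square in $\mathbb{Z}$, then $f_c(f_c(x)) = x^4 + 2cx^2 + c^2 + c$ is irreducible over $\mathbb{Q}$. If $-c$ is a square in $\mathbb{Z}$ and $c \neq 0, -1$, then writing $c = -b^2$ with $b \in \mathbb{Z}$ we have $f_c(f_c(x)) = (x^2 - (b^2 - b))(x^2 - (b^2+b))$, where each of the two quadratic factors is irreducible over $\mathbb{Q}$. *)

From mathcomp Require Import all_boot all_order all_algebra.
Set Implicit Arguments. Unset Strict Implicit. Unset Printing Implicit Defensive.
Import GRing.Theory Num.Theory.
Local Open Scope ring_scope.

Definition fc (c : int) : {poly rat} := 'X^2 + (c%:~R)%:P.

(* A rational root x of f_c(f_c(x)) would make -c = (x^2 + c)^2 a rational,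
   hence integral, square.  A factorisation into two quadratics either has the
   shape (X^2 + b)(X^2 + e) with b + e = 2c and be = c^2 + c, which again gives
   -c = (b - c)^2, or has equal constant terms whose square is c^2 + c; but
   c^2 + c lies strictly between two consecutive squares unless c = 0 or -1.
   For c = -b^2 the quadratics X^2 - (b^2 -+ b) are irreducible by the same
   consecutive-squares argument applied to -b and b. *)
From mathcomp Require Import all_boot all_order all_algebra.
From mathcomp Require Import zify ring.
Import GRing.Theory Num.Theory.
Local Open Scope ring_scope.

Lemma sqr_add_self_eq_sqr (c m : int) : c ^+ 2 + c = m ^+ 2 -> c = 0 \/ c = -1.
Proof.
rewrite -(real_normK (num_real m)) !expr2.
have := normr_ge0 m; move: `|m| => {}m m_ge0 E.
have [c_ge1|c_le0] : 1 <= c \/ c <= 0 by lia.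
  have : c < m by nia.
  nia.
have [c_le2|] : c <= -2 \/ -1 <= c by lia.
  have : m < - c by nia.
  nia.
lia.
Qed.

Lemma rat_sqr_int (x : rat) (n : int) : x ^+ 2 = n%:~R -> exists m : int, n = m ^+ 2.
Proof.
move=> x2E.
have numE : numq x ^+ 2 = n * denq x ^+ 2.
  by apply: (@intr_inj rat); rewrite !rmorphM /= numqE -x2E; ring.
have numE_nat : (`|numq x| ^ 2 = `|n| * `|denq x| ^ 2)%N by rewrite -!abszX -abszM numE.
have den_dvd : (`|denq x| ^ 2 %| `|numq x| ^ 2)%N by rewrite numE_nat dvdn_mull.
have den_coprime : coprime (`|denq x| ^ 2) (`|numq x| ^ 2).
  by rewrite coprimeXl // coprimeXr // coprime_sym coprime_num_den.
have /eqP den2 : (`|denq x| ^ 2 == 1)%N by rewrite -(gcdn_idPl den_dvd).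
have den1 : denq x = 1 by have := denq_gt0 x; move: den2; rewrite -abszX; lia.
by exists (numq x); rewrite numE den1 expr1n mulr1.
Qed.

Section Biquadratic.
Variable F : fieldType.
Implicit Types (p q r : {poly F}) (A B : F).

Lemma irreducible_quartic p : size p = 5%N -> (forall x, ~~ root p x) ->
  (forall q r, size q = 3%N -> size r = 3%N -> p != r * q) -> irreducible_poly p.
Proof.
move=> sp rootN noquad; split=> [|q sq1 qp]; first by rewrite sp.
have p0 : p != 0 by rewrite -size_poly_eq0 sp.
have q0 : q != 0 by apply: contraNneq p0 => q0; move: qp; rewrite q0 dvd0p.
case/dvdpP: (qp) => r pE.
have r0 : r != 0 by apply: contraNneq p0 => r0; rewrite pE r0 mul0r.
have sizes : (size r + size q = 6)%N.
  by move: (size_mul r0 q0); rewrite -pE sp; case: (size r + size q)%N => // n /= <-.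
have sq_le : (size q <= 5)%N by rewrite -sp dvdp_leq.
have sq_gt0 : (0 < size q)%N by rewrite size_poly_gt0.
have [sq2|sq2] := eqVneq (size q) 2%N.
  by have [x /(root_dvdp qp)] := poly2_root sq2; rewrite (negbTE (rootN x)).
have [sq4|sq4] := eqVneq (size q) 4%N.
  have [|x rx] := @poly2_root _ r; first by lia.
  by move: (rootN x); rewrite pE rootM rx.
have [sq3|sq3] := eqVneq (size q) 3%N.
  by have /eqP := noquad q r sq3 ltac:(lia).
by rewrite -dvdp_size_eqp // sp; lia.
Qed.

Lemma quadratic_product_coef_system A B s0 s1 s2 t0 t1 t2 :
  s2 * t2 = 1 -> s1 * t2 + s2 * t1 = 0 -> s0 * t2 + s1 * t1 + s2 * t0 = A ->
  s0 * t1 + s1 * t0 = 0 -> s0 * t0 = B ->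
  (exists b e, b + e = A /\ b * e = B) \/ (exists b, b ^+ 2 = B).
Proof.
move=> e4 e3 e2 e1 e0.
have s1E : s1 = - (s2 ^+ 2 * t1).
  apply/eqP; rewrite -subr_eq0 opprK.
  have -> : s1 + s2 ^+ 2 * t1 = (s1 * t2 + s2 * t1) * s2 + s1 * (1 - s2 * t2) by ring.
  by rewrite e3 e4 subrr !(mul0r, mulr0, addr0).
have [t1_0|t1N0] := eqVneq t1 0.
  left; exists (s0 * t2), (s2 * t0); split.
    by rewrite -e2 s1E t1_0; ring.
  by rewrite -e0 -[RHS]mulr1 -e4; ring.
right; exists (s0 * t2).
have s0E : s0 = s2 ^+ 2 * t0.
  apply: (mulfI t1N0); apply/eqP; rewrite -subr_eq0.
  have -> : t1 * s0 - t1 * (s2 ^+ 2 * t0) = s0 * t1 + s1 * t0 by rewrite s1E; ring.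
  by rewrite e1.
rewrite -e0 s0E; transitivity ((s2 * t2) ^+ 2 * s2 ^+ 2 * t0 ^+ 2); first by ring.
by rewrite e4; ring.
Qed.

Lemma biquadratic_quadratic_factors A B q r : size q = 3%N -> size r = 3%N ->
  'X^4 + A%:P * 'X^2 + B%:P = r * q ->
  (exists b e, b + e = A /\ b * e = B) \/ (exists b, b ^+ 2 = B).
Proof.
move=> sq sr pE.
have coef i : ('X^4 + A%:P * 'X^2 + B%:P)`_i = (r * q)`_i by rewrite pE.
have q_hi i : (3 <= i)%N -> q`_i = 0 by move=> ?; rewrite nth_default ?sq.
have r_hi i : (3 <= i)%N -> r`_i = 0 by move=> ?; rewrite nth_default ?sr.
move: (coef 0%N) (coef 1%N) (coef 2%N) (coef 3%N) (coef 4%N).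
rewrite !coefM !big_ord_recr !big_ord0 /= !coefD !coefCM !coefXn !coefC /=.
rewrite /subn /subn_rec /= !(q_hi 3%N, q_hi 4%N, r_hi 3%N, r_hi 4%N) //.
rewrite !(mulr0, mul0r, addr0, add0r, mulr1) => e0 e1 e2 e3 e4.
exact: quadratic_product_coef_system (esym e4) (esym e3) (esym e2) (esym e1) (esym e0).
Qed.

Lemma size_biquadratic A B : size ('X^4 + A%:P * 'X^2 + B%:P : {poly F}) = 5%N.
Proof.
rewrite -addrA size_polyDl size_polyXn // (leq_ltn_trans (size_polyD _ _)) // gtn_max.
rewrite (leq_ltn_trans (size_polyC_leq1 _)) // andbT mul_polyC.
by rewrite (leq_ltn_trans (size_scale_leq _ _)) // size_polyXn.
Qed.

Lemma irreducible_biquadratic A B :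
  (forall x, ~~ root ('X^4 + A%:P * 'X^2 + B%:P) x) ->
  ~ (exists b e, b + e = A /\ b * e = B) -> ~ (exists b, b ^+ 2 = B) ->
  irreducible_poly ('X^4 + A%:P * 'X^2 + B%:P).
Proof.
move=> rootN no_sum_prod no_sqrt.
apply: irreducible_quartic => // [|q r sq sr]; first exact: size_biquadratic.
by apply/eqP => /(biquadratic_quadratic_factors _ _ _ _ sq sr) [].
Qed.

End Biquadratic.

Lemma fc_comp_fc (c : int) : fc c \Po fc c =
  'X^4 + (2 * c%:~R)%:P * 'X^2 + ((c%:~R) ^+ 2 + c%:~R : rat)%:P.
Proof. by rewrite /fc comp_polyD comp_polyC !expr2 comp_polyM comp_polyX; ring. Qed.

Lemma irreducible_fc_comp_fc (c : int) :
  ~ (exists m : int, - c = m ^+ 2) -> irreducible_poly (fc c \Po fc c).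
Proof.
move=> negc_nsq; set k : rat := c%:~R.
have negc_nsq_rat (y : rat) : y ^+ 2 != - k.
  by apply/eqP; rewrite -rmorphN => /rat_sqr_int.
have rootN x : ~~ root (fc c \Po fc c) x.
  by rewrite /root horner_comp {1}/fc hornerD hornerXn hornerC addr_eq0.
move: rootN; rewrite fc_comp_fc => rootN.
apply: irreducible_biquadratic => //.
- case=> b [e [sum prod]]; move/negP: (negc_nsq_rat (b - k)); apply.
  have -> : (b - k) ^+ 2 = - k + (k ^+ 2 + k - b * e) + b * (b + e - 2 * k) by ring.
  by rewrite sum prod !subrr mulr0 !addr0.
- case=> b b2; have [|m /sqr_add_self_eq_sqr [] c_eq] := @rat_sqr_int b (c ^+ 2 + c).
    by rewrite b2 rmorphD rmorphXn.
  + by apply: negc_nsq; exists 0; rewrite c_eq.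
  + by apply: negc_nsq; exists 1; rewrite c_eq.
Qed.

Lemma fc_comp_fc_neg_sqr (b : int) : fc (- b ^+ 2) \Po fc (- b ^+ 2) =
  ('X^2 - ((b ^+ 2 - b)%:~R)%:P) * ('X^2 - ((b ^+ 2 + b)%:~R)%:P).
Proof. by rewrite fc_comp_fc; ring. Qed.

Lemma irreducible_X2_subC (n : int) :
  ~ (exists m : int, n = m ^+ 2) -> irreducible_poly ('X^2 - (n%:~R)%:P : {poly rat}).
Proof.
move=> n_nsq; apply: cubic_irreducible => [|x]; first by rewrite size_XnsubC.
apply/negP; rewrite /root !hornerE subr_eq0 => /eqP /rat_sqr_int.
exact: n_nsq.
Qed.

Theorem proposition2p1 (c : int) :
  ((~ exists m : int, - c = m ^+ 2) ->
     irreducible_poly (fc c \Po fc c)) /\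
  ((exists m : int, - c = m ^+ 2) -> c != 0 -> c != -1 ->
     forall b : int, c = - b ^+ 2 ->
       fc c \Po fc c =
         ('X^2 - ((b ^+ 2 - b)%:~R)%:P) * ('X^2 - ((b ^+ 2 + b)%:~R)%:P)
       /\ irreducible_poly ('X^2 - ((b ^+ 2 - b)%:~R)%:P : {poly rat})
       /\ irreducible_poly ('X^2 - ((b ^+ 2 + b)%:~R)%:P : {poly rat})).
Proof.
split=> [|_ c0 c1 b cE]; first exact: irreducible_fc_comp_fc.
split; first by rewrite cE fc_comp_fc_neg_sqr.
split; apply: irreducible_X2_subC => -[m].
- have := @sqr_add_self_eq_sqr (- b) m; rewrite sqrrN => /[apply].
  by move: c0 c1; rewrite cE; lia.
- by move/sqr_add_self_eq_sqr; move: c0 c1; rewrite cE; lia.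
Qed.
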